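(* Consider the single-server control problem of minimizing $\limsup_{T\to\infty}\frac1T\sum_{t=0}^{T-1}\mathbb{E}[c(X_t,\nu_t)]$ with $c(x,\nu)=Cx+(1-\nu)\lambda$. There exists an optimal stable stationary policy $v^*:\mathcal N\to\{0,1\}$, and $W(x)=e^{ax}$ (with $a>0$ satisfying $p(e^a-1)<\frac{q}{2}(1-e^{-a})$) serves as a Lyapunov function for the corresponding optimally controlled Markov chain $\{X^*_t\}$, i.e. $\mathbb{E}[W(X^*_{t+1})-W(X^*_t)\mid X^*_t]\le -bW(X^*_t)$ for $X^*_t\neq 0$, for some $b>0$.
   Context: Single-server (decoupled) problem: Bernoulli($p$) arrivals $\xi_t$, $p\in(0,1)$; queue length $X_t\in\mathcal N=\{0,1,2,\dots\}$ with $X_{t+1}=X_t-D_{t+1}+\nu_t\xi_{t+1}$, $\nu_t\in\{0,1\}$ an admissible control (1 = active, arrivals admitted; 0 = passive), where given $X_t=x\ge1$, $D_{t+1}\sim\mathrm{Binomial}(x,q/x)$ and there are no departures when $x=0$. Parameters: holding cost $C>0$, capacity $q$ with $1>q>2p$, Lagrange multiplier (subsidy/tax for passivity) $\lambda\in\mathbb R$. Cost per stage $c(x,\nu)=Cx+(1-\nu)\lambda$. *)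

From Stdlib Require Import Reals List.
Open Scope R_scope.

Fixpoint sumR (n : nat) (f : nat -> R) : R :=
  match n with O => 0 | S m => sumR m f + f m end.

(* Binomial(x, q/x) probability mass at d (for x = 0 this is the point mass at 0). *)
Definition binom_pmf (q : R) (x d : nat) : R :=
  Binomial.C x d * (q / INR x) ^ d * (1 - q / INR x) ^ (x - d)%nat.

(* One-step conditional expectation E[f(X_{t+1}) | X_t = x, nu_t = nu]
   with X_{t+1} = X_t - D_{t+1} + nu * xi_{t+1},
   D ~ Binomial(x, q/x) (D = 0 when x = 0), xi ~ Bernoulli(p) independent. *)
Definition Ex (p q : R) (f : nat -> R) (x : nat) (nu : bool) : R :=
  sumR (S x)%nat (fun d =>
    binom_pmf q x d *
    (if nu then p * f (S (x - d)%nat) + (1 - p) * f (x - d)%nat else f (x - d)%nat)).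

Definition cost (C lam : R) (x : nat) (nu : bool) : R :=
  C * INR x + (if nu then 0 else lam).

(* Admissible (history-dependent, possibly randomized) policy:
   given the past history [(X_0,nu_0);...;(X_{t-1},nu_{t-1})] and the current
   state X_t, returns the probability of choosing nu_t = 1 (active). *)
Definition policy := list (nat * bool) -> nat -> R.
Definition admissible (pi : policy) : Prop :=
  forall h x, 0 <= pi h x <= 1.

Definition stat (v : nat -> bool) : policy :=
  fun _ x => if v x then 1 else 0.

(* E[g(X_t, nu_t)] where the process is started (at "time 0" of the recursion)
   in current state x with past history h and follows pi. *)
Fixpoint Eval (p q : R) (pi : policy) (g : nat -> bool -> R) (t : nat)
  (h : list (nat * bool)) (x : nat) : R :=
  match t with
  | O => pi h x * g x true + (1 - pi h x) * g x false
  | S t' =>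
      pi h x * Ex p q (Eval p q pi g t' (h ++ (x, true) :: nil)) x true
      + (1 - pi h x) * Ex p q (Eval p q pi g t' (h ++ (x, false) :: nil)) x false
  end.

Definition avg (p q : R) (pi : policy) (g : nat -> bool -> R) (x0 : nat) (T : nat) : R :=
  / INR T * sumR T (fun t => Eval p q pi g t nil x0).

(* limsup_{T->oo} u T < c  (in the extended reals) *)
Definition limsup_lt (u : nat -> R) (c : R) : Prop :=
  exists c', c' < c /\ exists N, forall T, (N <= T)%nat -> u T <= c'.

(* limsup u <= limsup w  (in the extended reals [-oo,+oo]) *)
Definition limsup_le (u w : nat -> R) : Prop :=
  forall c, limsup_lt w c -> limsup_lt u c.

Definition J (p q C lam : R) (pi : policy) (x0 : nat) : nat -> R :=
  avg p q pi (cost C lam) x0.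

Definition stable (p q : R) (v : nat -> bool) : Prop :=
  forall x0, exists M, limsup_lt (avg p q (stat v) (fun x _ => INR x) x0) M.

Definition W (a : R) (x : nat) : R := exp (a * INR x).

From Stdlib Require Import Reals Lra Lia.
From Coquelicot Require Import Coquelicot.
Open Scope R_scope.

(* Vanishing discount. Given X_t = x, the survivors x - D are Binomial(x, 1 - q/x), so a
   one-step expectation is a Bernstein polynomial of the next-state function: it preserves
   monotonicity, and for W(x) = e^(a x) it equals k W(x) (1 - q (1 - e^-a) / x)^x
   <= (1 + p (e^a - 1)) e^(-q (1 - e^-a)) W(x), which is the Lyapunov drift for either action.

   The discounted values V_beta are increasing in x. Staying passive at x + 1 reaches x with
   probability bounded below, which bounds V_beta(x) - V_beta(0) uniformly in beta, while
   (1 - beta) V_beta(0) lies in [min(lam, 0), lam]. Along beta_n -> 1 the limsup G of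
   (1 - beta_n) V_beta_n(0) and the liminf h of V_beta_n - V_beta_n(0) satisfy the average-cost
   optimality inequality min_nu (c(x, nu) + E h) <= G + h(x). The minimizing stationary policy
   thus has average cost at most G, and is stable since c(x, nu) >= C x + min(lam, 0).
   Conversely, (1 - beta) V_beta(x0) exceeds the limsup average cost of an admissible policy by
   at most O(1 - beta) (summation by parts), so no policy does better than G. *)

(** * Finite sums and real sequences *)

Lemma sumR_ext n f g : (forall i, (i < n)%nat -> f i = g i) -> sumR n f = sumR n g.
Proof.
  induction n as [|n IH]; simpl; intros H; [reflexivity|].
  rewrite IH by (intros; apply H; lia). rewrite H by lia. reflexivity.
Qed.

Lemma sumR_le n f g : (forall i, (i < n)%nat -> f i <= g i) -> sumR n f <= sumR n g.
Proof.
  induction n as [|n IH]; simpl; intros H; [lra|].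
  assert (sumR n f <= sumR n g) by (apply IH; intros; apply H; lia).
  assert (f n <= g n) by (apply H; lia). lra.
Qed.

Lemma sumR_lin n a f g : sumR n (fun i => a * f i + g i) = a * sumR n f + sumR n g.
Proof. induction n as [|n IH]; simpl; [ring|]. rewrite IH; ring. Qed.

Lemma sumR_plus n f g : sumR n (fun i => f i + g i) = sumR n f + sumR n g.
Proof. induction n as [|n IH]; simpl; [ring|]. rewrite IH; ring. Qed.

Lemma sumR_const n c : sumR n (fun _ => c) = INR n * c.
Proof. induction n as [|n IH]; simpl sumR; [simpl; ring|]. rewrite IH, S_INR; ring. Qed.

Lemma sumR_minus_const n a c : sumR n (fun i => a i - c) = sumR n a - c * INR n.
Proof. induction n as [|n IH]; simpl sumR; [simpl; ring|]. rewrite IH, S_INR; ring. Qed.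

Lemma sumR_first n f : sumR (S n) f = f O + sumR n (fun i => f (S i)).
Proof. induction n as [|n IH]; simpl in *; [ring|]. rewrite IH; ring. Qed.

Lemma sumR_nonneg n f : (forall i, 0 <= f i) -> 0 <= sumR n f.
Proof. intros H. induction n as [|n IH]; simpl; [lra|]. specialize (H n). lra. Qed.

Lemma sumR_geom beta n : (1 - beta) * sumR n (fun t => beta ^ t) = 1 - beta ^ n.
Proof. induction n as [|n IH]; simpl sumR; simpl pow; [ring|]. rewrite Rmult_plus_distr_l, IH; ring. Qed.

Lemma sumR_abel a beta n :
  beta * sumR n (fun t => beta ^ t * a t) =
  beta ^ n * sumR n a + (1 - beta) * sumR n (fun t => beta ^ t * sumR t a).
Proof.
  induction n as [|n IH]; simpl sumR; simpl pow; [ring|].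
  transitivity (beta * sumR n (fun t => beta ^ t * a t) + beta * beta ^ n * a n); [ring|].
  rewrite IH; ring.
Qed.

Lemma pow_unit_interval r n : 0 <= r <= 1 -> 0 <= r ^ n <= 1.
Proof. intros Hr. split; [apply pow_le | rewrite <- (pow1 n); apply pow_incr]; lra. Qed.

Lemma sumR_nonneg_le_len n m f : (forall i, 0 <= f i) -> (n <= m)%nat -> sumR n f <= sumR m f.
Proof. intros Hf Hnm. induction Hnm as [|m _ IH]; simpl; [lra|]. specialize (Hf m). lra. Qed.

Lemma sumR_discounted_le_pos_part f beta N m :
  0 <= beta <= 1 -> (forall t, (N <= t)%nat -> f t <= 0) ->
  sumR m (fun t => beta ^ t * f t) <= sumR N (fun t => Rmax (f t) 0).
Proof.
  intros Hb Hf.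
  assert (Hpos : forall t, 0 <= Rmax (f t) 0) by (intros; apply Rmax_r).
  assert (Hstep : forall k,
    sumR k (fun t => beta ^ t * f t) <= sumR (Nat.min k N) (fun t => Rmax (f t) 0)).
  { induction k as [|k IH]; [simpl; lra|]. simpl sumR at 1.
    assert (0 <= beta ^ k <= 1) by (apply pow_unit_interval; lra).
    destruct (Nat.le_gt_cases N k) as [HN | HN].
    - rewrite Nat.min_r by lia. rewrite Nat.min_r in IH by lia.
      assert (f k <= 0) by auto. nra.
    - rewrite Nat.min_l by lia. rewrite Nat.min_l in IH by lia. simpl sumR.
      assert (f k <= Rmax (f k) 0) by apply Rmax_l. specialize (Hpos k). nra. }
  eapply Rle_trans; [apply Hstep|]. apply sumR_nonneg_le_len; [auto | lia].
Qed.

Lemma discounted_sum_le_of_partial_sums a c N :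
  (forall T, (N <= T)%nat -> sumR T a <= c * INR T) ->
  exists K, forall beta m, 1 / 2 <= beta < 1 -> (N <= m)%nat ->
    (1 - beta) * sumR m (fun t => beta ^ t * a t) <= c * (1 - beta ^ m) + K * (1 - beta).
Proof.
  intros Ha. set (f := fun t => sumR t a - c * INR t).
  assert (Hf : forall t, (N <= t)%nat -> f t <= 0) by (intros t Ht; unfold f; specialize (Ha t Ht); lra).
  set (K := sumR N (fun t => Rmax (f t) 0)).
  assert (HK : 0 <= K) by (apply sumR_nonneg; intros; apply Rmax_r).
  exists (2 * K). intros beta m Hb Hm.
  set (X := sumR m (fun t => beta ^ t * (a t - c))).
  assert (HX : beta * X <= (1 - beta) * K).
  { assert (Habel := sumR_abel (fun t => a t - c) beta m). cbv beta in Habel. fold X in Habel.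
    rewrite sumR_minus_const in Habel. fold (f m) in Habel.
    rewrite (sumR_ext _ _ (fun t => beta ^ t * f t)) in Habel
      by (intros; unfold f; rewrite sumR_minus_const; reflexivity).
    assert (0 <= beta ^ m) by (apply pow_le; lra). assert (f m <= 0) by auto.
    assert (sumR m (fun t => beta ^ t * f t) <= K) by (apply sumR_discounted_le_pos_part; [lra | auto]).
    nra. }
  assert (Hsplit : sumR m (fun t => beta ^ t * a t) = X + c * sumR m (fun t => beta ^ t)).
  { unfold X. rewrite Rplus_comm, <- sumR_lin. apply sumR_ext. intros; ring. }
  rewrite Hsplit, Rmult_plus_distr_l, (Rmult_comm c), <- Rmult_assoc, sumR_geom.
  assert (X <= 2 * (1 - beta) * K) by (destruct (Rle_dec 0 X); nra).
  assert ((1 - beta) * X <= 2 * K * (1 - beta)).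
  { apply Rle_trans with ((1 - beta) * (2 * (1 - beta) * K)); [apply Rmult_le_compat_l; lra|].
    assert (0 <= beta * (1 - beta) * K) by (apply Rmult_le_pos; [apply Rmult_le_pos|]; lra). nra. }
  rewrite Rmult_comm. lra.
Qed.

Lemma Un_growing_le f i j : Un_growing f -> (i <= j)%nat -> f i <= f j.
Proof. intros Hf Hij. apply Rge_le, growing_prop; auto. Qed.

Lemma Rmin_le_compat a a' b b' : a <= a' -> b <= b' -> Rmin a b <= Rmin a' b'.
Proof. intros; eapply Rle_trans; [apply Rle_min_compat_r | apply Rle_min_compat_l]; eassumption. Qed.

Lemma is_lim_seq_Rmin u v (a b : R) : is_lim_seq u a -> is_lim_seq v b ->
  is_lim_seq (fun n => Rmin (u n) (v n)) (Rmin a b).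
Proof.
  assert (Hmin : forall s t, Rmin s t = (s + t - Rabs (s - t)) / 2).
  { intros s t; unfold Rmin; destruct Rle_dec;
      [rewrite Rabs_left1 by lra | rewrite Rabs_right by lra]; field. }
  intros Hu Hv. rewrite Hmin. apply (is_lim_seq_ext (fun n => (u n + v n - Rabs (u n - v n)) / 2)).
  { intros; symmetry; apply Hmin. }
  apply (is_lim_seq_scal_r _ (/ 2) (a + b - Rabs (a - b))).
  apply (is_lim_seq_minus' _ _ (a + b) (Rabs (a - b))).
  - now apply is_lim_seq_plus'.
  - apply (is_lim_seq_abs _ (a - b)). now apply is_lim_seq_minus'.
Qed.

Lemma is_lim_seq_le_const u (l M : R) : is_lim_seq u l -> (forall n, u n <= M) -> l <= M.
Proof.
  intros H HM. change (Rbar_le l M).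
  apply is_lim_seq_le with u (fun _ => M); auto. apply is_lim_seq_const.
Qed.

Lemma LimSup_seq_bounded_spec u lo hi : (forall n, lo <= u n <= hi) ->
  forall eps, 0 < eps ->
    (forall N, exists n, (N <= n)%nat /\ real (LimSup_seq u) - eps < u n) /\
    (exists N, forall n, (N <= n)%nat -> u n < real (LimSup_seq u) + eps).
Proof.
  intros Hb eps He. destruct (ex_LimSup_seq u) as [l Hl].
  rewrite (is_LimSup_seq_unique _ _ Hl). destruct l as [l| |]; simpl in Hl.
  - apply (Hl (mkposreal eps He)).
  - exfalso. destruct (Hl (hi + 1) O) as [n [_ Hn]]. specialize (Hb n). lra.
  - exfalso. destruct (Hl lo) as [N HN]. specialize (HN N (le_n N)). specialize (Hb N). lra.
Qed.

Lemma LimInf_seq_bounded_spec u lo hi : (forall n, lo <= u n <= hi) ->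
  forall eps, 0 < eps ->
    (forall N, exists n, (N <= n)%nat /\ u n < real (LimInf_seq u) + eps) /\
    (exists N, forall n, (N <= n)%nat -> real (LimInf_seq u) - eps < u n).
Proof.
  intros Hb eps He. destruct (ex_LimInf_seq u) as [l Hl].
  rewrite (is_LimInf_seq_unique _ _ Hl). destruct l as [l| |]; simpl in Hl.
  - apply (Hl (mkposreal eps He)).
  - exfalso. destruct (Hl (hi + 1)) as [N HN]. specialize (HN N (le_n N)). specialize (Hb N). lra.
  - exfalso. destruct (Hl lo O) as [n [_ Hn]]. specialize (Hb n). lra.
Qed.

Lemma LimInf_seq_ge u lo hi : (forall n, lo <= u n <= hi) -> lo <= real (LimInf_seq u).
Proof.
  intros Hb. apply Rle_plus_epsilon. intros eps He.
  destruct (LimInf_seq_bounded_spec u lo hi Hb eps He) as [Hfreq _].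
  destruct (Hfreq O) as [n [_ Hn]]. specialize (Hb n). lra.
Qed.

Lemma INR_mul_pow_le beta n : 0 <= beta < 1 -> INR n * beta ^ n <= / (1 - beta).
Proof.
  intros Hb.
  assert (Hterm : forall t, (t < n)%nat -> beta ^ n <= beta ^ t).
  { intros t Ht. replace n with (t + (n - t))%nat by lia. rewrite pow_add.
    assert (0 <= beta ^ t) by (apply pow_le; lra).
    assert (beta ^ (n - t) <= 1) by (apply pow_unit_interval; lra). nra. }
  assert (Hsum : INR n * beta ^ n <= sumR n (fun t => beta ^ t)).
  { rewrite <- sumR_const. apply sumR_le; assumption. }
  assert (Hgeom := sumR_geom beta n). assert (0 <= beta ^ n) by (apply pow_le; lra).
  apply Rle_trans with (sumR n (fun t => beta ^ t)); auto.
  apply (Rmult_le_reg_l (1 - beta)); [lra|]. rewrite Rinv_r by lra. lra.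
Qed.

(* Along even exponents, [beta ^ (2k) * k <= beta ^ k / (1 - beta)] and [beta ^ k -> 0]. *)
Lemma pow_mul_affine_small beta A B eps N : 0 <= beta < 1 -> 0 <= A -> 0 <= B -> 0 < eps ->
  exists m, (N <= m)%nat /\ beta ^ m * (A + B * INR m) <= eps.
Proof.
  intros Hb HA HB He.
  set (K := A + 2 * B / (1 - beta)).
  assert (0 <= 2 * B / (1 - beta)) by (apply Rdiv_le_0_compat; lra).
  assert (HK : 0 <= K) by (unfold K; lra).
  destruct (pow_lt_1_zero beta ltac:(rewrite Rabs_right; lra) (eps / (K + 1))
              ltac:(apply Rdiv_lt_0_compat; lra)) as [M HM].
  set (k := Nat.max N M). assert (Hk := HM k ltac:(unfold k; lia)).
  rewrite Rabs_right in Hk by (apply Rle_ge, pow_le; lra).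
  exists (2 * k)%nat. split; [unfold k; lia|].
  assert (Hbk : 0 <= beta ^ k <= 1) by (apply pow_unit_interval; lra).
  assert (Hkb := INR_mul_pow_le beta k Hb).
  assert (Hsplit : beta ^ (2 * k) * (A + B * INR (2 * k))
                   = beta ^ k * (A * beta ^ k + 2 * B * (INR k * beta ^ k))).
  { replace (2 * k)%nat with (k + k)%nat by lia. rewrite pow_add, plus_INR. ring. }
  rewrite Hsplit.
  assert (A * beta ^ k + 2 * B * (INR k * beta ^ k) <= K).
  { unfold K. assert (2 * B * (INR k * beta ^ k) <= 2 * B * / (1 - beta)) by (apply Rmult_le_compat_l; lra).
    unfold Rdiv. nra. }
  assert (beta ^ k * K <= eps / (K + 1) * K) by (apply Rmult_le_compat_r; lra).
  assert (eps / (K + 1) * K <= eps).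
  { unfold Rdiv. rewrite Rmult_assoc. rewrite <- (Rmult_1_r eps) at 2.
    apply Rmult_le_compat_l; [lra|]. apply Rmult_le_reg_l with (K + 1); [lra|].
    field_simplify; lra. }
  nra.
Qed.

(** * Bernstein operators *)

(* [bernstein x r g] is E[g B] for B ~ Binomial(x, r), computed by conditioning on one trial. *)
Fixpoint bernstein (x : nat) (r : R) (g : nat -> R) : R :=
  match x with
  | O => g O
  | S x' => bernstein x' r (fun k => r * g (S k) + (1 - r) * g k)
  end.

Lemma bernstein_ext x r f g : (forall k, (k <= x)%nat -> f k = g k) -> bernstein x r f = bernstein x r g.
Proof.
  revert f g; induction x as [|x IH]; simpl; intros f g H; [apply H; lia|].
  apply IH. intros k Hk. rewrite !H by lia. reflexivity.
Qed.

Lemma bernstein_lin x r a f g :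
  bernstein x r (fun k => a * f k + g k) = a * bernstein x r f + bernstein x r g.
Proof.
  revert f g; induction x as [|x IH]; simpl; intros f g; [reflexivity|].
  rewrite <- IH. apply bernstein_ext. intros; ring.
Qed.

Lemma bernstein_const x r c : bernstein x r (fun _ => c) = c.
Proof.
  induction x as [|x IH]; simpl; [reflexivity|].
  transitivity (bernstein x r (fun _ => c)); [|exact IH]. apply bernstein_ext. intros; ring.
Qed.

Lemma bernstein_le x r f g : 0 <= r <= 1 -> (forall k, (k <= x)%nat -> f k <= g k) ->
  bernstein x r f <= bernstein x r g.
Proof.
  revert f g; induction x as [|x IH]; simpl; intros f g Hr H; [apply H; lia|].
  apply IH; auto. intros k Hk.
  assert (f (S k) <= g (S k)) by (apply H; lia). assert (f k <= g k) by (apply H; lia). nra.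
Qed.

Lemma bernstein_geom x r z c : bernstein x r (fun k => c * z ^ k) = c * (r * z + 1 - r) ^ x.
Proof.
  revert c; induction x as [|x IH]; simpl; intros c; [ring|].
  rewrite (bernstein_ext _ _ _ (fun k => (c * (r * z + 1 - r)) * z ^ k)); [rewrite IH; ring|].
  intros; simpl; ring.
Qed.

Lemma bernstein_indicator x r c : bernstein x r (fun k => if Nat.eqb k x then c else 0) = c * r ^ x.
Proof.
  revert c; induction x as [|x IH]; intros c; simpl; [ring|].
  rewrite (bernstein_ext _ _ _ (fun k => (r * c) * (if Nat.eqb k x then 1 else 0) + 0)).
  - rewrite bernstein_lin, IH, bernstein_const. ring.
  - intros k Hk. replace (Nat.eqb k (S x)) with false by (symmetry; apply Nat.eqb_neq; lia).
    destruct (Nat.eqb k x); ring.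
Qed.

(* An increasing [g] is at most [g (x - 1)] below the top value, which has probability [r ^ x]. *)
Lemma bernstein_le_top x r g : (1 <= x)%nat -> 0 <= r <= 1 -> Un_growing g ->
  bernstein x r g <= r ^ x * g x + (1 - r ^ x) * g (x - 1)%nat.
Proof.
  intros Hx Hr Hg.
  apply Rle_trans with
    (bernstein x r (fun k => (g x - g (x - 1)%nat) * (if Nat.eqb k x then 1 else 0) + g (x - 1)%nat)).
  - apply bernstein_le; auto. intros k Hk. destruct (Nat.eqb_spec k x) as [->|Hne]; [lra|].
    assert (g k <= g (x - 1)%nat) by (apply Un_growing_le; auto; lia). lra.
  - rewrite bernstein_lin, bernstein_const, bernstein_indicator. lra.
Qed.

Lemma bernstein_le_prob x r r' g : 0 <= r <= r' -> r' <= 1 -> Un_growing g ->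
  bernstein x r g <= bernstein x r' g.
Proof.
  revert g; induction x as [|x IH]; simpl; intros g Hr Hr' Hg; [lra|].
  apply Rle_trans with (bernstein x r (fun k => r' * g (S k) + (1 - r') * g k)).
  - apply bernstein_le; [lra|]. intros k _. specialize (Hg k). nra.
  - apply IH; auto. intros k. assert (Hk1 := Hg (S k)). assert (Hk := Hg k). nra.
Qed.

Lemma bernstein_le_succ x r g : 0 <= r <= 1 -> Un_growing g -> bernstein x r g <= bernstein (S x) r g.
Proof. intros Hr Hg; simpl. apply bernstein_le; auto. intros k _. specialize (Hg k). nra. Qed.

Lemma is_lim_seq_bernstein x r (F : nat -> nat -> R) (f : nat -> R) :
  (forall y, is_lim_seq (fun k => F k y) (f y)) ->
  is_lim_seq (fun k => bernstein x r (F k)) (bernstein x r f).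
Proof.
  revert F f; induction x as [|x IH]; intros F f H; simpl; [apply H|].
  apply (IH (fun k y => r * F k (S y) + (1 - r) * F k y)). intros y.
  apply is_lim_seq_plus'.
  - apply (is_lim_seq_scal_l _ r (f (S y))), H.
  - apply (is_lim_seq_scal_l _ (1 - r) (f y)), H.
Qed.

Lemma binomial_C_n_n n : Binomial.C n n = 1.
Proof. rewrite <- (C_n_0 n), pascal_step1 by lia. f_equal; lia. Qed.

Lemma binomial_pmf_step x d s : (d < x)%nat ->
  Binomial.C (S x) (S d) * s ^ S d * (1 - s) ^ (S x - S d) =
  s * (Binomial.C x d * s ^ d * (1 - s) ^ (x - d)) +
  (1 - s) * (Binomial.C x (S d) * s ^ S d * (1 - s) ^ (x - S d)).
Proof.
  intros H. rewrite <- pascal by auto.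
  replace (S x - S d)%nat with (x - d)%nat by lia.
  replace (x - d)%nat with (S (x - S d)) by lia. simpl. ring.
Qed.

(* The number of survivors x - D of x trials with failure probability s is Binomial(x, 1 - s). *)
Lemma binomial_sum_bernstein x s F :
  sumR (S x) (fun d => Binomial.C x d * s ^ d * (1 - s) ^ (x - d) * F (x - d)%nat)
  = bernstein x (1 - s) F.
Proof.
  revert F; induction x as [|x IH]; intros F.
  { simpl. rewrite C_n_0. ring. }
  simpl bernstein. rewrite <- IH.
  set (w := fun x d => Binomial.C x d * s ^ d * (1 - s) ^ (x - d)).
  assert (Hw0 : w (S x) O = (1 - s) * w x O).
  { unfold w. rewrite !C_n_0, !Nat.sub_0_r. simpl. ring. }
  assert (Hwtop : w (S x) (S x) = s * w x x).
  { unfold w. rewrite !binomial_C_n_n, !Nat.sub_diag. simpl. ring. }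
  assert (Hwstep : forall d, (d < x)%nat -> w (S x) (S d) = s * w x d + (1 - s) * w x (S d)).
  { intros d Hd. unfold w. apply binomial_pmf_step, Hd. }
  change (sumR (S (S x)) (fun d => w (S x) d * F (S x - d)%nat) =
          sumR (S x) (fun d => w x d * ((1 - s) * F (S (x - d)) + (1 - (1 - s)) * F (x - d)%nat))).
  rewrite sumR_first. simpl sumR at 1.
  rewrite (sumR_ext x _ (fun d => s * (w x d * F (x - d)%nat) + (1 - s) * (w x (S d) * F (S (x - S d)))))
    by (intros d Hd; rewrite Hwstep by assumption; replace (S x - S d)%nat with (x - d)%nat by lia;
        replace (S (x - S d)) with (x - d)%nat by lia; ring).
  rewrite (sumR_ext (S x) _ (fun d => (1 - s) * (w x d * F (S (x - d))) + s * (w x d * F (x - d)%nat)))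
    by (intros; ring).
  rewrite sumR_plus, sumR_plus, (sumR_first x (fun d => (1 - s) * (w x d * F (S (x - d))))).
  simpl sumR. rewrite Hw0, Hwtop, !Nat.sub_0_r, Nat.sub_diag. replace (S x - S x)%nat with O by lia. ring.
Qed.

(** * The one-step kernel *)

(* At x = 0 the junk value q / 0 = 0 makes this 1: no departures from an empty queue. *)
Definition survival_prob (q : R) (x : nat) : R := 1 - q / INR x.

Definition arrival_mean (p : R) (f : nat -> R) (nu : bool) (k : nat) : R :=
  if nu then p * f (S k) + (1 - p) * f k else f k.

Lemma Ex_bernstein p q f x nu : Ex p q f x nu = bernstein x (survival_prob q x) (arrival_mean p f nu).
Proof.
  unfold Ex, survival_prob. rewrite <- binomial_sum_bernstein. apply sumR_ext. intros d _.
  unfold binom_pmf, arrival_mean. destruct nu; ring.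
Qed.

Lemma exp_mul_INR a k : exp (a * INR k) = exp a ^ k.
Proof.
  induction k as [|k IH]; [simpl; rewrite Rmult_0_r, exp_0; reflexivity|].
  rewrite S_INR, Rmult_plus_distr_l, Rmult_1_r, exp_plus, IH. simpl. ring.
Qed.

Lemma pow_one_minus_div_le_exp y x : (1 <= x)%nat -> 0 <= y <= 1 -> (1 - y / INR x) ^ x <= exp (- y).
Proof.
  intros Hx Hy. assert (H1 : 1 <= INR x) by (apply (le_INR 1); lia).
  assert (Hyx : 0 <= y / INR x <= 1).
  { split; [apply Rdiv_le_0_compat; lra|]. apply Rle_div_l; lra. }
  apply Rle_trans with (exp (- (y / INR x)) ^ x).
  - apply pow_incr. assert (H := exp_ineq1_le (- (y / INR x))). lra.
  - rewrite <- exp_mul_INR. right. f_equal. field. lra.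
Qed.

Section QueueKernel.
Variables p q : R.
Hypotheses (hp0 : 0 < p) (hp1 : p < 1) (hq0 : 0 < q) (hq1 : q < 1).

Lemma survival_prob_range x : 0 <= survival_prob q x <= 1.
Proof.
  unfold survival_prob. destruct x as [|x]; [simpl; unfold Rdiv; rewrite Rinv_0; lra|].
  assert (1 <= INR (S x)) by (apply (le_INR 1); lia).
  assert (0 <= q / INR (S x) <= 1); [|lra].
  split; [apply Rdiv_le_0_compat; lra | apply Rle_div_l; lra].
Qed.

Lemma survival_prob_lt_1 x : (1 <= x)%nat -> 0 < survival_prob q x < 1.
Proof.
  intros Hx. unfold survival_prob. assert (1 <= INR x) by (apply (le_INR 1); lia).
  assert (0 < q / INR x) by (apply Rdiv_lt_0_compat; lra).
  assert (q / INR x < 1) by (apply Rlt_div_l; lra). lra.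
Qed.

Lemma survival_prob_pow_lt_1 x : (1 <= x)%nat -> 0 < survival_prob q x ^ x < 1.
Proof.
  intros Hx. assert (Hr := survival_prob_lt_1 x Hx).
  split; [apply pow_lt; lra | apply pow_lt_1_compat; lra || lia].
Qed.

Lemma survival_prob_le_succ x : (1 <= x)%nat -> survival_prob q x <= survival_prob q (S x).
Proof.
  intros Hx. unfold survival_prob. assert (1 <= INR x) by (apply (le_INR 1); lia).
  assert (INR x <= INR (S x)) by (apply le_INR; lia).
  assert (q / INR (S x) <= q / INR x); [|lra].
  unfold Rdiv; apply Rmult_le_compat_l; [lra|]. apply Rinv_le_contravar; lra.
Qed.

Lemma arrival_mean_growing f nu : Un_growing f -> Un_growing (arrival_mean p f nu).
Proof.
  intros Hf k; unfold arrival_mean; destruct nu; [|apply Hf].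
  assert (H1 := Hf k); assert (H2 := Hf (S k)); nra.
Qed.

Lemma Ex_le f g x nu : (forall y, (y <= S x)%nat -> f y <= g y) -> Ex p q f x nu <= Ex p q g x nu.
Proof.
  intros H. rewrite !Ex_bernstein. apply bernstein_le; [apply survival_prob_range|].
  intros k Hk. unfold arrival_mean. destruct nu; [|apply H; lia].
  assert (f (S k) <= g (S k)) by (apply H; lia). assert (f k <= g k) by (apply H; lia). nra.
Qed.

Lemma Ex_ext f g x nu : (forall y, f y = g y) -> Ex p q f x nu = Ex p q g x nu.
Proof. intros H. unfold Ex. apply sumR_ext. intros; rewrite !H; reflexivity. Qed.

Lemma Ex_lin a f g x nu : Ex p q (fun y => a * f y + g y) x nu = a * Ex p q f x nu + Ex p q g x nu.
Proof.
  rewrite !Ex_bernstein, <- bernstein_lin. apply bernstein_ext.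
  intros; unfold arrival_mean; destruct nu; ring.
Qed.

Lemma Ex_const c x nu : Ex p q (fun _ => c) x nu = c.
Proof.
  rewrite Ex_bernstein. transitivity (bernstein x (survival_prob q x) (fun _ => c));
    [|apply bernstein_const].
  apply bernstein_ext. intros; unfold arrival_mean; destruct nu; ring.
Qed.

Lemma Ex_le_succ f x nu : Un_growing f -> Ex p q f x nu <= Ex p q f (S x) nu.
Proof.
  intros Hf. assert (Hg := arrival_mean_growing f nu Hf). rewrite !Ex_bernstein. destruct x as [|x].
  - simpl. assert (H1 := survival_prob_range 1). assert (H2 := Hg O). nra.
  - apply Rle_trans with (bernstein (S x) (survival_prob q (S (S x))) (arrival_mean p f nu)).
    + apply bernstein_le_prob; auto; [|apply survival_prob_range].
      split; [apply survival_prob_range | apply survival_prob_le_succ; lia].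
    + apply bernstein_le_succ; auto. apply survival_prob_range.
Qed.

Lemma Ex_passive_0 f : Ex p q f 0 false = f O.
Proof. rewrite Ex_bernstein. reflexivity. Qed.

Lemma Ex_passive_le_top f x : Un_growing f -> (1 <= x)%nat ->
  Ex p q f x false <= survival_prob q x ^ x * f x + (1 - survival_prob q x ^ x) * f (x - 1)%nat.
Proof. intros Hf Hx. rewrite Ex_bernstein. apply bernstein_le_top; auto. apply survival_prob_range. Qed.

Lemma Ex_passive_le f x : Un_growing f -> Ex p q f x false <= f x.
Proof.
  intros Hf. destruct x as [|x]; [rewrite Ex_passive_0; lra|].
  assert (H := Ex_passive_le_top f (S x) Hf ltac:(lia)). replace (S x - 1)%nat with x in H by lia.
  assert (H1 := survival_prob_range (S x)).
  assert (0 <= survival_prob q (S x) ^ S x <= 1) by (apply pow_unit_interval; lra).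
  assert (f x <= f (S x)) by apply Hf. nra.
Qed.

Lemma is_lim_seq_Ex x nu (F : nat -> nat -> R) (f : nat -> R) :
  (forall y, is_lim_seq (fun k => F k y) (f y)) ->
  is_lim_seq (fun k => Ex p q (F k) x nu) (Ex p q f x nu).
Proof.
  intros H. apply (is_lim_seq_ext (fun k => bernstein x (survival_prob q x) (arrival_mean p (F k) nu))).
  { intros; symmetry; apply Ex_bernstein. }
  rewrite Ex_bernstein. apply is_lim_seq_bernstein. intros y; unfold arrival_mean. destruct nu; [|apply H].
  apply is_lim_seq_plus'.
  - apply (is_lim_seq_scal_l _ p (f (S y))), H.
  - apply (is_lim_seq_scal_l _ (1 - p) (f y)), H.
Qed.

Lemma Ex_W a x nu : Ex p q (W a) x nu =
  (if nu then p * exp a + 1 - p else 1) * W a x * (1 - q * (1 - exp (- a)) / INR x) ^ x.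
Proof.
  rewrite Ex_bernstein. unfold arrival_mean, W.
  rewrite (bernstein_ext _ _ _ (fun k => (if nu then p * exp a + 1 - p else 1) * exp a ^ k)).
  - rewrite bernstein_geom, exp_mul_INR, Rmult_assoc, <- Rpow_mult_distr. do 2 f_equal.
    unfold survival_prob, Rdiv. rewrite exp_Ropp. set (t := / INR x).
    assert (0 < exp a) by apply exp_pos. field. lra.
  - intros k _. destruct nu; rewrite !exp_mul_INR; simpl; ring.
Qed.

(* With y = q (1 - e^-a), the drift factor is at most (1 + p (e^a - 1)) e^-y,
   and the hypothesis gives 1 + p (e^a - 1) < 1 + y/2 < e^y. *)
Lemma Ex_W_drift a : 0 < a -> p * (exp a - 1) < q / 2 * (1 - exp (- a)) ->
  exists b, 0 < b /\ forall x nu, x <> 0%nat -> Ex p q (W a) x nu - W a x <= - b * W a x.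
Proof.
  intros Ha Hdrift. set (y := q * (1 - exp (- a))). set (K := 1 + p * (exp a - 1)).
  assert (Hea : 1 < exp a) by (rewrite <- exp_0; apply exp_increasing; lra).
  assert (Hema : 0 < exp (- a) < 1) by (split; [apply exp_pos | rewrite <- exp_0; apply exp_increasing; lra]).
  assert (Hy : 0 < y < 1) by (unfold y; split; nra).
  assert (HK : K < 1 + y) by (unfold K, y in *; lra).
  assert (Hey : 1 + y < exp y) by (apply exp_ineq1; lra).
  assert (Hexp : exp y * exp (- y) = 1) by (rewrite <- exp_plus, Rplus_opp_r; apply exp_0).
  assert (0 < exp (- y)) by apply exp_pos.
  exists (1 - K * exp (- y)). split; [nra|].
  intros x nu Hx. rewrite Ex_W. fold y.
  assert (HW : 0 < W a x) by apply exp_pos.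
  assert (Hpow : (1 - y / INR x) ^ x <= exp (- y)) by (apply pow_one_minus_div_le_exp; [lia | lra]).
  assert (0 <= (1 - y / INR x) ^ x).
  { apply pow_le. assert (1 <= INR x) by (apply (le_INR 1); lia).
    assert (y / INR x <= 1) by (apply Rle_div_l; lra). lra. }
  assert (Hk : 0 <= (if nu then p * exp a + 1 - p else 1) <= K) by (destruct nu; unfold K; nra).
  set (k := if nu then p * exp a + 1 - p else 1) in *. set (z := (1 - y / INR x) ^ x) in *.
  assert (k * z <= K * exp (- y)) by nra. nra.
Qed.

Lemma stat_admissible v : admissible (stat v).
Proof. intros h x; unfold stat; destruct (v x); lra. Qed.

Lemma Eval_ext pi g1 g2 t h x : (forall y nu, g1 y nu = g2 y nu) ->
  Eval p q pi g1 t h x = Eval p q pi g2 t h x.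
Proof.
  intros H. revert h x; induction t as [|t IH]; intros h x; simpl; [rewrite !H; reflexivity|].
  rewrite !(Ex_ext _ _ _ _ (fun y => IH _ y)). reflexivity.
Qed.

Lemma Eval_le pi g1 g2 t h x : admissible pi -> (forall y nu, g1 y nu <= g2 y nu) ->
  Eval p q pi g1 t h x <= Eval p q pi g2 t h x.
Proof.
  intros Hpi Hg. revert h x; induction t as [|t IH]; intros h x; simpl; destruct (Hpi h x).
  - assert (H1 := Hg x true); assert (H2 := Hg x false); nra.
  - assert (Hstep : forall nu, Ex p q (Eval p q pi g1 t (h ++ (x, nu) :: nil)) x nu <=
                       Ex p q (Eval p q pi g2 t (h ++ (x, nu) :: nil)) x nu)
      by (intros; apply Ex_le; intros; apply IH).
    assert (H1 := Hstep true); assert (H2 := Hstep false). nra.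
Qed.

Lemma Eval_lin pi a g1 g2 t h x :
  Eval p q pi (fun y nu => a * g1 y nu + g2 y nu) t h x = a * Eval p q pi g1 t h x + Eval p q pi g2 t h x.
Proof.
  revert h x; induction t as [|t IH]; intros h x; simpl; [ring|].
  rewrite !(Ex_ext _ _ _ _ (fun y => IH _ y)), !Ex_lin. ring.
Qed.

Lemma Eval_const pi c t h x : Eval p q pi (fun _ _ => c) t h x = c.
Proof.
  revert h x; induction t as [|t IH]; intros h x; simpl; [ring|].
  rewrite !(Ex_ext _ _ _ _ (fun y => IH _ y)), !Ex_const. ring.
Qed.

Lemma Eval_add pi g1 g2 t h x :
  Eval p q pi (fun y nu => g1 y nu + g2 y nu) t h x = Eval p q pi g1 t h x + Eval p q pi g2 t h x.
Proof.
  rewrite <- (Rmult_1_l (Eval p q pi g1 t h x)), <- Eval_lin. apply Eval_ext; intros; ring.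
Qed.

Lemma Eval_scal pi a g t h x : Eval p q pi (fun y nu => a * g y nu) t h x = a * Eval p q pi g t h x.
Proof.
  rewrite <- (Rplus_0_r (a * _)), <- (Eval_const pi 0 t h x), <- Eval_lin.
  apply Eval_ext; intros; ring.
Qed.

Lemma Eval_Ex pi f t h x :
  Eval p q pi (fun y nu => Ex p q f y nu) t h x = Eval p q pi (fun y _ => f y) (S t) h x.
Proof.
  revert h x; induction t as [|t IH]; intros h x.
  - simpl. f_equal; f_equal; symmetry; apply Ex_ext; intros; ring.
  - cbn [Eval].
    rewrite !(Ex_ext _ _ _ _ (fun y => IH _ y)). reflexivity.
Qed.

Lemma Eval_stat v g t h x : Eval p q (stat v) g t h x = Eval p q (stat v) (fun y _ => g y (v y)) t h x.
Proof.
  revert h x; induction t as [|t IH]; intros h x; simpl; unfold stat; [destruct (v x); ring|].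
  rewrite !(Ex_ext _ _ _ _ (fun y => IH _ y)). reflexivity.
Qed.

(* At most one customer arrives per step. *)
Lemma Eval_state_le pi t h x : admissible pi -> Eval p q pi (fun y _ => INR y) t h x <= INR x + INR t.
Proof.
  intros Hpi. revert h x; induction t as [|t IH]; intros h x; simpl Eval.
  - destruct (Hpi h x). simpl INR. nra.
  - assert (Hstep : forall nu h', Ex p q (Eval p q pi (fun y _ => INR y) t h') x nu <= INR x + INR (S t)).
    { intros nu h'. rewrite <- (Ex_const (INR x + INR (S t)) x nu). apply Ex_le. intros y Hy.
      apply Rle_trans with (INR y + INR t); [apply IH|].
      assert (INR y <= INR (S x)) by (apply le_INR; auto). rewrite !S_INR in *. lra. }
    destruct (Hpi h x).
    assert (H1 := Hstep true (h ++ (x, true) :: nil)%list).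
    assert (H2 := Hstep false (h ++ (x, false) :: nil)%list).
    nra.
Qed.

(** * Discounted costs *)

Section Discounted.
Variables C lam : R.
Hypothesis hC : 0 < C.

Definition bellman (beta : R) (u : nat -> R) (x : nat) : R :=
  Rmin (cost C lam x true + beta * Ex p q u x true) (cost C lam x false + beta * Ex p q u x false).

(* Value iteration started from the lower bound min(lam, 0) / (1 - beta), so that it increases. *)
Fixpoint value_iter (beta : R) (k : nat) : nat -> R :=
  match k with
  | O => fun _ => Rmin lam 0 / (1 - beta)
  | S k' => bellman beta (value_iter beta k')
  end.

Definition disc_value (beta : R) (x : nat) : R := real (Lim_seq (fun k => value_iter beta k x)).

Definition disc_value_bound (beta : R) (x : nat) : R := (C * INR x + Rabs lam) / (1 - beta).

Lemma cost_ge x nu : Rmin lam 0 + C * INR x <= cost C lam x nu.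
Proof. unfold cost. assert (H1 := Rmin_l lam 0). assert (H2 := Rmin_r lam 0). destruct nu; lra. Qed.

Lemma bellman_le beta u w x : 0 <= beta -> (forall y, u y <= w y) -> bellman beta u x <= bellman beta w x.
Proof.
  intros Hb H. unfold bellman.
  apply Rmin_le_compat; apply Rplus_le_compat_l, Rmult_le_compat_l; auto; apply Ex_le; auto.
Qed.

Lemma bellman_le_action beta u x nu : bellman beta u x <= cost C lam x nu + beta * Ex p q u x nu.
Proof. unfold bellman; destruct nu; [apply Rmin_l | apply Rmin_r]. Qed.

Section FixedDiscount.
Variable beta : R.
Hypothesis hb : 0 < beta < 1.

Lemma value_iter_le_succ k x : value_iter beta k x <= value_iter beta (S k) x.
Proof.
  revert x; induction k as [|k IH]; intros x; simpl; [|apply bellman_le; [lra | apply IH]].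
  unfold bellman. rewrite !Ex_const.
  assert (H1 := cost_ge x true); assert (H2 := cost_ge x false).
  assert (0 <= C * INR x) by (apply Rmult_le_pos; [lra | apply pos_INR]).
  assert (Rmin lam 0 / (1 - beta) = Rmin lam 0 + beta * (Rmin lam 0 / (1 - beta))) by (field; lra).
  apply Rmin_glb; lra.
Qed.

Lemma disc_value_bound_growing : Un_growing (disc_value_bound beta).
Proof.
  intros x. unfold disc_value_bound. rewrite S_INR. unfold Rdiv.
  apply Rmult_le_compat_r; [left; apply Rinv_0_lt_compat; lra | nra].
Qed.

Lemma value_iter_le_bound k x : value_iter beta k x <= disc_value_bound beta x.
Proof.
  revert x; induction k as [|k IH]; intros x; simpl; unfold disc_value_bound in *.
  - apply Rle_trans with 0.
    + apply Rmult_le_0_r; [apply Rmin_r | left; apply Rinv_0_lt_compat; lra].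
    + apply Rdiv_le_0_compat; [|lra].
      assert (0 <= INR x) by apply pos_INR. assert (0 <= Rabs lam) by apply Rabs_pos. nra.
  - assert (Hp : Ex p q (value_iter beta k) x false <= Ex p q (disc_value_bound beta) x false)
      by (apply Ex_le; intros; apply IH).
    assert (Hb : Ex p q (disc_value_bound beta) x false <= disc_value_bound beta x)
      by (apply Ex_passive_le, disc_value_bound_growing).
    unfold disc_value_bound in *. assert (lam <= Rabs lam) by apply Rle_abs.
    eapply Rle_trans; [apply (bellman_le_action _ _ _ false)|]. unfold cost.
    apply Rle_trans with (C * INR x + Rabs lam + beta * ((C * INR x + Rabs lam) / (1 - beta))); [nra|].
    right. field. lra.
Qed.

Lemma value_iter_growing k : Un_growing (value_iter beta k).
Proof.
  induction k as [|k IH]; intros x; simpl; [lra|]. unfold bellman, cost.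
  assert (C * INR x <= C * INR (S x)) by (rewrite S_INR; nra).
  apply Rmin_le_compat; apply Rplus_le_compat; try lra;
    apply Rmult_le_compat_l; try lra; apply Ex_le_succ, IH.
Qed.

Lemma is_lim_seq_value_iter x : is_lim_seq (fun k => value_iter beta k x) (disc_value beta x).
Proof.
  apply Lim_seq_correct', ex_finite_lim_seq_incr with (disc_value_bound beta x).
  - intros; apply value_iter_le_succ.
  - intros; apply value_iter_le_bound.
Qed.

Lemma value_iter_le_disc_value k x : value_iter beta k x <= disc_value beta x.
Proof.
  change (Rbar_le (value_iter beta k x) (disc_value beta x)).
  apply is_lim_seq_le with (fun _ => value_iter beta k x) (fun n => value_iter beta (n + k) x).
  - intros n. induction n as [|n IH]; [simpl; lra|]. eapply Rle_trans; [apply IH | apply value_iter_le_succ].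
  - apply is_lim_seq_const.
  - apply (is_lim_seq_incr_n (fun n => value_iter beta n x) k), is_lim_seq_value_iter.
Qed.

Lemma disc_value_le_bound x : disc_value beta x <= disc_value_bound beta x.
Proof.
  apply is_lim_seq_le_const with (fun k => value_iter beta k x); [apply is_lim_seq_value_iter|].
  intros k; apply value_iter_le_bound.
Qed.

Lemma disc_value_ge x : Rmin lam 0 / (1 - beta) <= disc_value beta x.
Proof. apply (value_iter_le_disc_value 0). Qed.

Lemma disc_value_growing : Un_growing (disc_value beta).
Proof.
  intros x. apply is_lim_seq_le_const with (fun k => value_iter beta k x); [apply is_lim_seq_value_iter|].
  intros k. eapply Rle_trans; [apply value_iter_growing | apply value_iter_le_disc_value].
Qed.

Lemma disc_value_le_action x nu :
  disc_value beta x <= cost C lam x nu + beta * Ex p q (disc_value beta) x nu.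
Proof.
  apply is_lim_seq_le_const with (fun k => value_iter beta (S k) x).
  - apply (is_lim_seq_incr_1 (fun k => value_iter beta k x)), is_lim_seq_value_iter.
  - intros k. eapply Rle_trans; [apply (bellman_le_action _ _ _ nu)|].
    apply Rplus_le_compat_l, Rmult_le_compat_l; [lra|]. apply Ex_le; intros; apply value_iter_le_disc_value.
Qed.

Lemma bellman_disc_value_le x : bellman beta (disc_value beta) x <= disc_value beta x.
Proof.
  assert (Hlim : forall nu, is_lim_seq (fun k => cost C lam x nu + beta * Ex p q (value_iter beta k) x nu)
                                       (cost C lam x nu + beta * Ex p q (disc_value beta) x nu)).
  { intros nu. apply is_lim_seq_plus'; [apply is_lim_seq_const|].
    apply (is_lim_seq_scal_l _ beta (Ex p q (disc_value beta) x nu)).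
    apply is_lim_seq_Ex. intros; apply is_lim_seq_value_iter. }
  apply is_lim_seq_le_const with (fun k => bellman beta (value_iter beta k) x).
  - apply is_lim_seq_Rmin; apply Hlim.
  - intros k. apply (value_iter_le_disc_value (S k)).
Qed.

End FixedDiscount.

(** * Vanishing discount and average-cost optimality *)

Lemma avg_disc_value_0_ge beta : 0 < beta < 1 -> Rmin lam 0 <= (1 - beta) * disc_value beta O.
Proof. intros hb. assert (H := disc_value_ge beta hb O). apply Rle_div_l in H; lra. Qed.

Lemma avg_disc_value_0_le beta : 0 < beta < 1 -> (1 - beta) * disc_value beta O <= lam.
Proof.
  intros hb. assert (H := disc_value_le_action beta hb O false).
  rewrite Ex_passive_0 in H. unfold cost in H. simpl INR in H. lra.
Qed.

Lemma rel_value_ge beta x : 0 < beta < 1 -> 0 <= disc_value beta x - disc_value beta O.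
Proof.
  intros hb. assert (disc_value beta O <= disc_value beta x)
    by (apply (Un_growing_le _ O x (disc_value_growing beta hb)); lia).
  lra.
Qed.

(* Staying passive at x + 1, the queue drops to at most x with probability 1 - rho; this bounds
   the relative values uniformly in beta. *)
Lemma rel_value_succ_le beta x : 0 < beta < 1 ->
  let rho := survival_prob q (S x) ^ S x in
  (disc_value beta (S x) - disc_value beta O) * (1 - rho)
  <= C * INR (S x) + Rabs lam + (1 - rho) * (disc_value beta x - disc_value beta O).
Proof.
  intros hb rho.
  assert (Hrho : 0 < rho < 1) by (apply survival_prob_pow_lt_1; lia).
  assert (Hact := disc_value_le_action beta hb (S x) false). unfold cost in Hact. cbv iota in Hact.
  assert (Htop := Ex_passive_le_top (disc_value beta) (S x) (disc_value_growing beta hb) ltac:(lia)).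
  replace (S x - 1)%nat with x in Htop by lia. fold rho in Htop.
  assert (Hlam : lam - (1 - beta) * disc_value beta O <= Rabs lam).
  { assert (H0 := avg_disc_value_0_ge beta hb). assert (Rmin lam 0 >= lam - Rabs lam); [|lra].
    unfold Rmin; destruct Rle_dec; [assert (0 <= Rabs lam) by apply Rabs_pos | rewrite Rabs_right]; lra. }
  assert (Hx := rel_value_ge beta x hb). assert (Hy := rel_value_ge beta (S x) hb).
  set (py := disc_value beta (S x) - disc_value beta O) in *.
  set (px := disc_value beta x - disc_value beta O) in *.
  assert (Hbeta : beta * Ex p q (disc_value beta) (S x) false
                  <= beta * (rho * disc_value beta (S x) + (1 - rho) * disc_value beta x))
    by (apply Rmult_le_compat_l; lra).
  assert (py * (1 - beta * rho) <= C * INR (S x) + Rabs lam + beta * (1 - rho) * px)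
    by (unfold py, px in *; nra).
  assert (0 <= (1 - beta) * ((1 - rho) * px)) by (apply Rmult_le_pos; [|apply Rmult_le_pos]; lra).
  assert (0 <= py * rho * (1 - beta)) by (apply Rmult_le_pos; [apply Rmult_le_pos|]; lra).
  nra.
Qed.

Fixpoint rel_value_bound (x : nat) : R :=
  match x with
  | O => 0
  | S y => rel_value_bound y + (C * INR (S y) + Rabs lam) / (1 - survival_prob q (S y) ^ S y)
  end.

Lemma rel_value_le beta x : 0 < beta < 1 -> disc_value beta x - disc_value beta O <= rel_value_bound x.
Proof.
  intros hb. induction x as [|x IH]; [simpl; lra|].
  change (rel_value_bound (S x)) with
    (rel_value_bound x + (C * INR (S x) + Rabs lam) / (1 - survival_prob q (S x) ^ S x)).
  assert (H := rel_value_succ_le beta x hb). cbv zeta in H.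
  set (rho := survival_prob q (S x) ^ S x) in *.
  assert (Hrho : 0 < rho < 1) by (apply survival_prob_pow_lt_1; lia).
  apply Rle_div_r in H; [|lra].
  replace ((C * INR (S x) + Rabs lam + (1 - rho) * (disc_value beta x - disc_value beta O)) / (1 - rho))
    with ((disc_value beta x - disc_value beta O) + (C * INR (S x) + Rabs lam) / (1 - rho)) in H
    by (field; lra).
  lra.
Qed.

Definition disc_factor (n : nat) : R := 1 - / INR (n + 2).

Definition avg_seq (n : nat) : R := (1 - disc_factor n) * disc_value (disc_factor n) O.

Definition rel_seq (n x : nat) : R := disc_value (disc_factor n) x - disc_value (disc_factor n) O.

Definition gain : R := real (LimSup_seq avg_seq).

Definition bias (x : nat) : R := real (LimInf_seq (fun n => rel_seq n x)).

Lemma disc_factor_range n : 0 < disc_factor n < 1 /\ 1 / 2 <= disc_factor n.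
Proof.
  unfold disc_factor. assert (0 <= INR n) by apply pos_INR.
  assert (2 <= INR (n + 2)) by (rewrite plus_INR; simpl; lra).
  assert (0 < / INR (n + 2)) by (apply Rinv_0_lt_compat; lra).
  assert (/ INR (n + 2) <= / 2) by (apply Rinv_le_contravar; lra). lra.
Qed.

Lemma disc_factor_lt_1 n : 0 < disc_factor n < 1.
Proof. apply disc_factor_range. Qed.

Lemma disc_factor_eventually K eps : 0 < eps ->
  exists N, forall n, (N <= n)%nat -> (1 - disc_factor n) * K <= eps.
Proof.
  intros He. destruct (INR_archimed eps (Rabs K) He) as [N HN]. exists N. intros n Hn.
  unfold disc_factor. replace (1 - (1 - / INR (n + 2))) with (/ INR (n + 2)) by ring.
  assert (INR N <= INR (n + 2)) by (apply le_INR; lia). assert (0 < INR (n + 2)) by (apply lt_0_INR; lia).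
  apply Rle_trans with (/ INR (n + 2) * Rabs K).
  - apply Rmult_le_compat_l; [left; apply Rinv_0_lt_compat; lra | apply Rle_abs].
  - rewrite Rmult_comm. apply Rle_div_l; [lra | nra].
Qed.

Lemma avg_seq_range n : Rmin lam 0 <= avg_seq n <= lam.
Proof. split; [apply avg_disc_value_0_ge | apply avg_disc_value_0_le]; apply disc_factor_lt_1. Qed.

Lemma rel_seq_range n x : 0 <= rel_seq n x <= rel_value_bound x.
Proof. split; [apply rel_value_ge | apply rel_value_le]; apply disc_factor_lt_1. Qed.

Lemma bias_ge x : 0 <= bias x.
Proof. apply (LimInf_seq_ge _ 0 (rel_value_bound x)). intros; apply rel_seq_range. Qed.

Lemma rel_seq_eventually_ge eps M : 0 < eps ->
  exists N, forall n, (N <= n)%nat -> forall y, (y <= M)%nat -> bias y - eps < rel_seq n y.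
Proof.
  intros He. induction M as [|M [N1 HN1]].
  - destruct (LimInf_seq_bounded_spec (fun n => rel_seq n O) 0 (rel_value_bound O)
                (fun n => rel_seq_range n O) eps He) as [_ [N HN]].
    exists N. intros n Hn y Hy. replace y with O by lia. apply HN, Hn.
  - destruct (LimInf_seq_bounded_spec (fun n => rel_seq n (S M)) 0 (rel_value_bound (S M))
                (fun n => rel_seq_range n (S M)) eps He) as [_ [N2 HN2]].
    exists (Nat.max N1 N2). intros n Hn y Hy.
    destruct (Nat.eq_dec y (S M)) as [->|]; [apply HN2 | apply HN1]; lia.
Qed.

Lemma bellman_rel_seq_le n x :
  Rmin (cost C lam x true + disc_factor n * Ex p q (rel_seq n) x true)
       (cost C lam x false + disc_factor n * Ex p q (rel_seq n) x false) <= avg_seq n + rel_seq n x.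
Proof.
  set (beta := disc_factor n). assert (H := bellman_disc_value_le beta (disc_factor_lt_1 n) x).
  assert (HE : forall nu, Ex p q (disc_value beta) x nu = Ex p q (rel_seq n) x nu + disc_value beta O).
  { intros nu. rewrite <- (Ex_const (disc_value beta O) x nu), <- (Rmult_1_l (Ex p q (rel_seq n) x nu)),
      <- Ex_lin.
    apply Ex_ext. intros; unfold rel_seq; fold beta; ring. }
  unfold bellman in H. rewrite !HE, !Rmult_plus_distr_l, <- !Rplus_assoc, <- Rplus_min_distr_r in H.
  unfold avg_seq. fold beta. change (rel_seq n x) with (disc_value beta x - disc_value beta O). lra.
Qed.

Lemma Ex_bias_le_eventually x eps : 0 < eps ->
  exists N, forall n, (N <= n)%nat -> forall nu,
    Ex p q bias x nu - 2 * eps <= disc_factor n * Ex p q (rel_seq n) x nu.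
Proof.
  intros He. destruct (rel_seq_eventually_ge eps (S x) He) as [N1 HN1].
  destruct (disc_factor_eventually (Rabs (Ex p q bias x true) + Rabs (Ex p q bias x false)) eps He)
    as [N2 HN2].
  exists (Nat.max N1 N2). intros n Hn nu.
  assert (Hb := disc_factor_range n).
  assert (Hrel : Ex p q bias x nu - eps <= Ex p q (rel_seq n) x nu).
  { replace (Ex p q bias x nu - eps) with (Ex p q (fun y => 1 * bias y + - eps) x nu)
      by (rewrite Ex_lin, Ex_const; ring).
    apply Ex_le. intros y Hy. assert (HH := HN1 n ltac:(lia) y Hy). lra. }
  assert (Hsmall : (1 - disc_factor n) * Ex p q bias x nu <= eps).
  { eapply Rle_trans; [|apply (HN2 n ltac:(lia))]. apply Rmult_le_compat_l; [lra|].
    assert (HA1 := Rle_abs (Ex p q bias x true)); assert (HA2 := Rle_abs (Ex p q bias x false)).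
    assert (HA3 := Rabs_pos (Ex p q bias x true)); assert (HA4 := Rabs_pos (Ex p q bias x false)).
    destruct nu; lra. }
  assert (disc_factor n * (Ex p q bias x nu - eps) <= disc_factor n * Ex p q (rel_seq n) x nu)
    by (apply Rmult_le_compat_l; lra).
  nra.
Qed.

Lemma average_cost_optimality_ineq x :
  Rmin (cost C lam x true + Ex p q bias x true) (cost C lam x false + Ex p q bias x false) <= gain + bias x.
Proof.
  apply Rle_plus_epsilon. intros e He. set (eps := e / 4).
  destruct (LimSup_seq_bounded_spec avg_seq (Rmin lam 0) lam avg_seq_range eps ltac:(unfold eps; lra))
    as [_ [N1 HN1]].
  destruct (Ex_bias_le_eventually x eps ltac:(unfold eps; lra)) as [N2 HN2].
  destruct (LimInf_seq_bounded_spec (fun n => rel_seq n x) 0 (rel_value_bound x)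
              (fun n => rel_seq_range n x) eps ltac:(unfold eps; lra)) as [Hfreq _].
  destruct (Hfreq (Nat.max N1 N2)) as [n [Hn Hbias]]. fold (bias x) in Hbias.
  assert (Hgain := HN1 n ltac:(lia)). fold gain in Hgain.
  assert (Hstep := bellman_rel_seq_le n x).
  assert (Hlow : Rmin (cost C lam x true + Ex p q bias x true) (cost C lam x false + Ex p q bias x false)
                 - 2 * eps <=
                 Rmin (cost C lam x true + disc_factor n * Ex p q (rel_seq n) x true)
                      (cost C lam x false + disc_factor n * Ex p q (rel_seq n) x false)).
  { unfold Rminus. rewrite Rplus_min_distr_r.
    apply Rmin_le_compat; rewrite Rplus_assoc; apply Rplus_le_compat_l, HN2; lia. }
  unfold eps in *. lra.
Qed.

Definition opt_policy (x : nat) : bool :=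
  if Rle_dec (cost C lam x true + Ex p q bias x true) (cost C lam x false + Ex p q bias x false)
  then true else false.

Lemma opt_policy_spec x : cost C lam x (opt_policy x) + Ex p q bias x (opt_policy x) <= gain + bias x.
Proof. assert (H := average_cost_optimality_ineq x). unfold opt_policy, Rmin in *. destruct Rle_dec; lra. Qed.

Lemma opt_policy_cost_sum_le x0 T :
  sumR T (fun t => Eval p q (stat opt_policy) (cost C lam) t nil x0)
  + Eval p q (stat opt_policy) (fun y _ => bias y) T nil x0 <= INR T * gain + bias x0.
Proof.
  induction T as [|T IH]; [simpl; lra|].
  change (sumR (S T) ?f) with (sumR T f + f T). rewrite <- Eval_Ex.
  assert (Eval p q (stat opt_policy) (cost C lam) T nil x0
          + Eval p q (stat opt_policy) (fun y nu => Ex p q bias y nu) T nil x0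
          <= gain + Eval p q (stat opt_policy) (fun y _ => bias y) T nil x0).
  { rewrite <- Eval_add, Eval_stat, <- (Eval_const (stat opt_policy) gain T nil x0) at 1.
    rewrite <- Eval_add. apply Eval_le; [apply stat_admissible|].
    intros y _. assert (H := opt_policy_spec y). lra. }
  rewrite S_INR. lra.
Qed.

Lemma opt_policy_avg_cost_le x0 T : (1 <= T)%nat ->
  J p q C lam (stat opt_policy) x0 T <= gain + bias x0 / INR T.
Proof.
  intros HT. unfold J, avg. assert (H := opt_policy_cost_sum_le x0 T).
  assert (0 <= Eval p q (stat opt_policy) (fun y _ => bias y) T nil x0).
  { rewrite <- (Eval_const (stat opt_policy) 0 T nil x0). apply Eval_le; [apply stat_admissible|].
    intros; apply bias_ge. }
  assert (0 < INR T) by (apply lt_0_INR; lia).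
  apply Rle_trans with (/ INR T * (INR T * gain + bias x0)).
  - apply Rmult_le_compat_l; [left; apply Rinv_0_lt_compat|]; lra.
  - right. field. lra.
Qed.

Lemma disc_value_le_cost_sum pi x0 beta m : admissible pi -> 0 < beta < 1 ->
  disc_value beta x0 <= sumR m (fun t => beta ^ t * Eval p q pi (cost C lam) t nil x0)
                        + beta ^ m * Eval p q pi (fun y _ => disc_value beta y) m nil x0.
Proof.
  intros Hpi hb. induction m as [|m IH]; [simpl; lra|].
  eapply Rle_trans; [apply IH|].
  change (sumR (S m) ?f) with (sumR m f + f m). rewrite <- Eval_Ex.
  assert (Eval p q pi (fun y _ => disc_value beta y) m nil x0 <=
          Eval p q pi (cost C lam) m nil x0
          + beta * Eval p q pi (fun y nu => Ex p q (disc_value beta) y nu) m nil x0).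
  { rewrite <- Eval_scal, <- Eval_add. apply Eval_le; auto. intros; apply disc_value_le_action; auto. }
  assert (0 <= beta ^ m) by (apply pow_le; lra).
  simpl pow. nra.
Qed.

(* The tail is controlled through V_beta <= (C y + |lam|) / (1 - beta) and E[X_m] <= x0 + m. *)
Lemma avg_disc_value_le_cost_sum pi x0 beta m : admissible pi -> 0 < beta < 1 ->
  (1 - beta) * disc_value beta x0
  <= (1 - beta) * sumR m (fun t => beta ^ t * Eval p q pi (cost C lam) t nil x0)
     + beta ^ m * (C * (INR x0 + INR m) + Rabs lam).
Proof.
  intros Hpi hb. assert (Hd := disc_value_le_cost_sum pi x0 beta m Hpi hb).
  assert (Htail : (1 - beta) * Eval p q pi (fun y _ => disc_value beta y) m nil x0
                  <= C * (INR x0 + INR m) + Rabs lam).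
  { apply Rle_trans with
      ((1 - beta) * Eval p q pi (fun y _ => C / (1 - beta) * INR y + Rabs lam / (1 - beta)) m nil x0).
    - apply Rmult_le_compat_l; [lra|]. apply Eval_le; auto. intros y _.
      eapply Rle_trans; [apply disc_value_le_bound; auto|]. unfold disc_value_bound. right; field; lra.
    - rewrite Eval_lin, Eval_const. assert (H1 := Eval_state_le pi m nil x0 Hpi).
      assert (0 <= C / (1 - beta)) by (apply Rdiv_le_0_compat; lra).
      apply Rle_trans with ((1 - beta) * (C / (1 - beta) * (INR x0 + INR m) + Rabs lam / (1 - beta))).
      + apply Rmult_le_compat_l; [lra|]. apply Rplus_le_compat_r, Rmult_le_compat_l; auto.
      + right; field; lra. }
  assert (0 <= beta ^ m) by (apply pow_le; lra). nra.
Qed.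

Lemma avg_disc_value_le pi x0 c N K : admissible pi ->
  (forall beta m, 1 / 2 <= beta < 1 -> (N <= m)%nat ->
     (1 - beta) * sumR m (fun t => beta ^ t * Eval p q pi (cost C lam) t nil x0)
     <= c * (1 - beta ^ m) + K * (1 - beta)) ->
  forall beta, 1 / 2 <= beta < 1 -> (1 - beta) * disc_value beta x0 <= c + Rabs K * (1 - beta).
Proof.
  intros Hpi HK beta hb. apply Rle_plus_epsilon. intros eps He.
  assert (0 <= INR x0) by apply pos_INR. assert (0 <= Rabs c) by apply Rabs_pos.
  assert (0 <= Rabs lam) by apply Rabs_pos.
  destruct (pow_mul_affine_small beta (Rabs c + C * INR x0 + Rabs lam) C eps N
              ltac:(lra) ltac:(nra) ltac:(lra) He) as [m [Hm Hsmall]].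
  assert (Hd := avg_disc_value_le_cost_sum pi x0 beta m Hpi ltac:(lra)).
  assert (Hs := HK beta m hb Hm).
  assert (- c * beta ^ m <= Rabs c * beta ^ m)
    by (apply Rmult_le_compat_r; [apply pow_le; lra | rewrite <- Rabs_Ropp; apply Rle_abs]).
  assert (K * (1 - beta) <= Rabs K * (1 - beta)) by (apply Rmult_le_compat_r; [lra | apply Rle_abs]).
  assert (Rabs c * beta ^ m + beta ^ m * (C * (INR x0 + INR m) + Rabs lam)
          = beta ^ m * (Rabs c + C * INR x0 + Rabs lam + C * INR m)) by ring.
  lra.
Qed.

Lemma gain_le_avg_cost pi x0 c N : admissible pi ->
  (forall T, (N <= T)%nat -> J p q C lam pi x0 T <= c) -> gain <= c.
Proof.
  intros Hpi HJ.
  destruct (discounted_sum_le_of_partial_sums (fun t => Eval p q pi (cost C lam) t nil x0) c N)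
    as [K HK].
  { intros T HT. destruct T as [|T]; [simpl; lra|].
    assert (H := HJ (S T) HT). unfold J, avg in H.
    assert (0 < INR (S T)) by apply lt_0_INR, Nat.lt_0_succ.
    apply Rmult_le_compat_l with (r := INR (S T)) in H; [|lra].
    rewrite <- Rmult_assoc, Rinv_r in H by lra. lra. }
  assert (Havg : forall n, avg_seq n <= c + Rabs K * (1 - disc_factor n)).
  { intros n. destruct (disc_factor_range n) as [hb hb2].
    assert (disc_value (disc_factor n) O <= disc_value (disc_factor n) x0)
      by (apply (Un_growing_le _ O x0 (disc_value_growing _ hb)); lia).
    eapply Rle_trans; [|apply (avg_disc_value_le pi x0 c N K Hpi HK); lra].
    unfold avg_seq. apply Rmult_le_compat_l; lra. }
  apply Rle_plus_epsilon. intros e He.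
  destruct (disc_factor_eventually (Rabs K) (e / 2) ltac:(lra)) as [N1 HN1].
  destruct (LimSup_seq_bounded_spec avg_seq (Rmin lam 0) lam avg_seq_range (e / 2) ltac:(lra))
    as [Hfreq _].
  destruct (Hfreq N1) as [n [Hn Hgain]]. fold gain in Hgain.
  specialize (HN1 n Hn). specialize (Havg n). lra.
Qed.

Lemma INR_inv_eventually_le A eps : 0 <= A -> 0 < eps ->
  exists T0, (1 <= T0)%nat /\ forall T, (T0 <= T)%nat -> A / INR T <= eps.
Proof.
  intros HA He. destruct (INR_archimed eps A He) as [n Hn]. exists (Nat.max n 1). split; [lia|].
  intros T HT. assert (INR n <= INR T) by (apply le_INR; lia). assert (0 < INR T) by (apply lt_0_INR; lia).
  apply Rle_div_l; [lra | nra].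
Qed.

Lemma opt_policy_optimal x0 pi : admissible pi ->
  limsup_le (J p q C lam (stat opt_policy) x0) (J p q C lam pi x0).
Proof.
  intros Hpi c [c' [Hc' [N HN]]]. assert (Hgain := gain_le_avg_cost pi x0 c' N Hpi HN).
  exists ((gain + c) / 2). split; [lra|].
  destruct (INR_inv_eventually_le (bias x0) ((c - gain) / 2) (bias_ge x0) ltac:(lra)) as [T0 [HT0 HT]].
  exists T0. intros T HT'. eapply Rle_trans; [apply opt_policy_avg_cost_le; lia|].
  specialize (HT T HT'). lra.
Qed.

Lemma opt_policy_stable : stable p q opt_policy.
Proof.
  intros x0. set (m := Rmin lam 0). set (pol := stat opt_policy).
  exists ((gain - m + 2) / C), ((gain - m + 1) / C). split.
  { unfold Rdiv. apply Rmult_lt_compat_r; [apply Rinv_0_lt_compat|]; lra. }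
  destruct (INR_inv_eventually_le (bias x0) 1 (bias_ge x0) ltac:(lra)) as [T0 [HT0 HT]].
  exists T0. intros T HT'. specialize (HT T HT').
  set (S := sumR T (fun t => Eval p q pol (fun y _ => INR y) t nil x0)).
  assert (Hcost : C * S + INR T * m <= sumR T (fun t => Eval p q pol (cost C lam) t nil x0)).
  { unfold S. rewrite <- sumR_const, <- sumR_lin. apply sumR_le. intros t _.
    rewrite <- (Eval_const pol m t nil x0), <- Eval_lin. apply Eval_le; [apply stat_admissible|].
    intros y nu. assert (H := cost_ge y nu). unfold m. lra. }
  assert (Hbias : 0 <= Eval p q pol (fun y _ => bias y) T nil x0).
  { rewrite <- (Eval_const pol 0 T nil x0). apply Eval_le; [apply stat_admissible|]. intros; apply bias_ge. }
  assert (HU := opt_policy_cost_sum_le x0 T). fold pol in HU.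
  assert (0 < INR T) by (apply lt_0_INR; lia).
  assert (HS : S <= (INR T * (gain - m) + bias x0) / C) by (apply Rle_div_r; lra).
  unfold avg. fold S. apply Rle_trans with (/ INR T * ((INR T * (gain - m) + bias x0) / C)).
  - apply Rmult_le_compat_l; [left; apply Rinv_0_lt_compat|]; lra.
  - replace (/ INR T * ((INR T * (gain - m) + bias x0) / C)) with ((gain - m + bias x0 / INR T) / C)
      by (field; lra).
    unfold Rdiv in *. apply Rmult_le_compat_r; [left; apply Rinv_0_lt_compat|]; lra.
Qed.

End Discounted.
End QueueKernel.

Theorem lemma3 (p q C lam : R) (hp0 : 0 < p) (hp1 : p < 1)
  (hq : 2 * p < q) (hq1 : q < 1) (hC : 0 < C) :
  exists v : nat -> bool,
    (forall (x0 : nat) (pi : policy), admissible pi ->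
       limsup_le (J p q C lam (stat v) x0) (J p q C lam pi x0)) /\
    stable p q v /\
    (forall a : R, 0 < a -> p * (exp a - 1) < q / 2 * (1 - exp (- a)) ->
       exists b : R, 0 < b /\
         forall x : nat, x <> 0%nat ->
           Ex p q (W a) x (v x) - W a x <= - b * W a x).
Proof.
  assert (hq0 : 0 < q) by lra.
  exists (opt_policy p q C lam). split; [|split].
  - intros x0 pi Hpi. now apply opt_policy_optimal.
  - now apply opt_policy_stable.
  - intros a Ha Hdrift. destruct (Ex_W_drift p q) with a as [b [Hb Hdec]]; try assumption.
    exists b. split; [exact Hb | intros x Hx; apply Hdec, Hx].
Qed.
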